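(* Let $n$ be a positive integer and let $\widetilde\lambda:\widetilde C\to\widetilde C'$ be a morphism of $r$-perfect $\mathcal S$-complexes which is a height $n$ morphism (respectively a strong height $n$ morphism). Then there exists a height $0$ morphism (respectively a strong height $0$ morphism) $\widetilde\lambda':\Sigma^n\widetilde C\to\widetilde C'$ such that $\widetilde\lambda'\circ\widetilde\iota_n=\widetilde\lambda$.
   Context: Let $R$ be a commutative ring; graded modules are $\mathbb Z$-graded, $V[i]_j=V_{i+j}$, differentials have degree $-1$. An $\mathcal S$-complex over $R$ is a chain complex $(\widetilde C,\widetilde d)$ of finitely generated free graded $R$-modules with a graded decomposition $\widetilde C=C\oplus C[-1]\oplus\mathsf R$ in which $\widetilde d=\begin{pmatrix} d&0&0\\ v&-d&\delta_2\\ \delta_1&0&r\end{pmatrix}$. It is $r$-perfect if $\mathsf R$ is supported in even degrees (so $r=0$). A degree $k$ morphism $\widetilde C\to\widetilde C'$ is an $R$-linear map of degree $k$ of the form $\begin{pmatrix}\lambda&0&0\\ \mu&\lambda&\Delta_2\\ \Delta_1&0&\rho\end{pmatrix}$ with $\widetilde d'\widetilde\lambda=\widetilde\lambda\widetilde d$. For such a morphism between $r$-perfect complexes set $\tau_0=\rho$ and, for $i\ge0$, $\tau_{i+1}=\delta_1'v'^i\Delta_2+\Delta_1v^i\delta_2+\sum_{j=0}^{i-1}\delta_1'v'^j\mu v^{i-1-j}\delta_2:\mathsf R\to\mathsf R'$. A height $n$ morphism ($n\ge0$) is an even degree morphism between $r$-perfect $\mathcal S$-complexes with $\tau_j=0$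 for all $0\le j<n$; it is strong height $n$ if moreover $\tau_n$ is an isomorphism. For $r$-perfect $\widetilde C$ and $n\ge1$, $\Sigma^n\widetilde C$ is the $\mathcal S$-complex with irreducible part $C_{\Sigma^n}=C[-2n]\oplus\bigoplus_{i=0}^{n-1}\mathsf R[-2i-1]$ (summands ordered $C[-2n],\mathsf R[-1],\mathsf R[-3],\dots,\mathsf R[-2n+1]$), reducible part $\mathsf R$, and differential components: $d_{\Sigma^n}$ has first row $(d,-\delta_2,-v\delta_2,\dots,-v^{n-1}\delta_2)$ and all other rows zero; $v_{\Sigma^n}$ is the $(n+1)\times(n+1)$ matrix with $(1,1)$-entry $v$, $(2,1)$-entry $\delta_1$, $(k+1,k)$-entry the identity for $2\le k\le n$, all other entries zero; $(\delta_2)_{\Sigma^n}=(v^n\delta_2,0,\dots,0)^T$; $(\delta_1)_{\Sigma^n}=(0,\dots,0,1)$ (identity on the last summand); $r_{\Sigma^n}=0$. The morphism $\widetilde\iota_n:\widetilde C\to\Sigma^n\widetilde C$ has $\lambda$-component $(1,0,\dots,0)^T$ (identity onto $C[-2n]$), $\Delta_2$-component $(0,1,0,\dots,0)^T$ (identity onto $\mathsf R[-1]$), and all other components zero. *)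

(* Finitely generated free graded R-modules are modelled by a
   homogeneous basis: a module of rank m is given by the degree function
   'I_m -> int of its basis.  R-linear maps are matrices acting on column
   vectors (g \o f = g *m f); a map A is of degree k iff every nonzero entry
   A i j satisfies deg_target i = deg_source j + k.  Shifts: V[s] has basis
   degrees (deg - s), so V[-s] has degrees deg + s. *)
From HB Require Import structures.
From mathcomp Require Import all_boot all_order all_algebra.
Set Implicit Arguments. Unset Strict Implicit. Unset Printing Implicit Defensive.
Import Order.TTheory GRing.Theory Num.Theory.
Local Open Scope ring_scope.

Section SComplexes.
Variable R : comPzRingType.

Definition graded_hom (m n : nat) (dt : 'I_m -> int) (ds : 'I_n -> int)
  (k : int) (A : 'M[R]_(m, n)) : Prop :=
  forall i j, A i j != 0 -> dt i = ds j + k.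

(* Data of a (candidate) S-complex  C~ = C (+) C[-1] (+) R. *)
Record SData := MkSData {
  sm : nat;                 (* rank of C *)
  sp : nat;                 (* rank of the reducible part R *)
  sdegC : 'I_sm -> int;
  sdegR : 'I_sp -> int;
  sd : 'M[R]_sm;
  sv : 'M[R]_sm;            (* v : C -> C[-1] *)
  sdelta1 : 'M[R]_(sp, sm);
  sdelta2 : 'M[R]_(sm, sp); (* delta2 : R -> C[-1] *)
  sr : 'M[R]_sp
}.

Definition tot (C : SData) : nat := (sm C + sm C) + sp C.

Definition tdeg (C : SData) (i : 'I_(tot C)) : int :=
  match split i with
  | inl a => match split a with
             | inl x => sdegC x
             | inr x => sdegC x + 1
             end
  | inr y => sdegR y
  end.

(* the total differential  [[d,0,0],[v,-d,delta2],[delta1,0,r]] *)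
Definition tot_d (C : SData) : 'M[R]_(tot C) :=
  block_mx (block_mx (sd C) 0 (sv C) (- sd C)) (col_mx 0 (sdelta2 C))
           (row_mx (sdelta1 C) 0) (sr C).

Definition is_Scx (C : SData) : Prop :=
  graded_hom (@tdeg C) (@tdeg C) (-1) (tot_d C) /\ tot_d C *m tot_d C = 0.

Definition rperfect (C : SData) : Prop := forall j, (2 %| @sdegR C j)%Z.

(* Data of a (candidate) morphism [[lam,0,0],[mu,lam,D2],[D1,0,rho]] *)
Record SMor (C C' : SData) := MkSMor {
  mlam : 'M[R]_(sm C', sm C);
  mmu : 'M[R]_(sm C', sm C);
  mD1 : 'M[R]_(sp C', sm C);
  mD2 : 'M[R]_(sm C', sp C);
  mrho : 'M[R]_(sp C', sp C)
}.

Definition mor_tot (C C' : SData) (L : SMor C C') : 'M[R]_(tot C', tot C) :=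
  block_mx (block_mx (mlam L) 0 (mmu L) (mlam L)) (col_mx 0 (mD2 L))
           (row_mx (mD1 L) 0) (mrho L).

Definition is_Smor (C C' : SData) (k : int) (L : SMor C C') : Prop :=
  graded_hom (@tdeg C') (@tdeg C) k (mor_tot L) /\
  tot_d C' *m mor_tot L = mor_tot L *m tot_d C.

Definition mxpow (m : nat) (A : 'M[R]_m) (i : nat) : 'M[R]_m :=
  iter i (mulmx A) 1%:M.

Definition tau (C C' : SData) (L : SMor C C') (i : nat) : 'M[R]_(sp C', sp C) :=
  match i with
  | 0 => mrho L
  | i'.+1 =>
      sdelta1 C' *m mxpow (sv C') i' *m mD2 L
      + mD1 L *m mxpow (sv C) i' *m sdelta2 C
      + \sum_(j < i') (sdelta1 C' *m mxpow (sv C') j *m mmu L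
                        *m mxpow (sv C) (i' - 1 - j) *m sdelta2 C)
  end.

Definition mx_iso (m n : nat) (A : 'M[R]_(m, n)) : Prop :=
  exists B : 'M[R]_(n, m), B *m A = 1%:M /\ A *m B = 1%:M.

Definition height_mor (n : nat) (C C' : SData) (k : int) (L : SMor C C') : Prop :=
  [/\ rperfect C, rperfect C', is_Smor k L, (2 %| k)%Z &
      forall j, (j < n)%N -> tau L j = 0].

Definition strong_height_mor (n : nat) (C C' : SData) (k : int) (L : SMor C C')
  : Prop := height_mor n k L /\ mx_iso (tau L n).

Lemma blk_inn_lt (n p : nat) (k : 'I_(n * p)) : (k %% p < p)%N.
Proof.
have hp : (0 < p)%N.
  case: p k => [|p] k //; have := ltn_ord k; move: (nat_of_ord k) => x.
  by rewrite muln0.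
exact: ltn_pmod.
Qed.

(* index k of  (+)_{b<n} R[-2b-1]  (ordered by b) ~ block b = k/p, inner k%p *)
Definition blk (n p : nat) (k : 'I_(n * p)) : nat := (k %/ p)%N.
Definition inn (n p : nat) (k : 'I_(n * p)) : 'I_p := Ordinal (blk_inn_lt k).

Definition Sigma (n : nat) (C : SData) : SData :=
  let m := sm C in let p := sp C in
  {| sm := m + n * p;
     sp := p;
     sdegC := fun i => match split i with
                       | inl a => sdegC a + (2 * n)%:Z
                       | inr k => sdegR (inn k) + (2 * (n - blk k))%:Z - 1
                       end;
     sdegR := @sdegR C;
     sd := block_mx (sd C)
             (\matrix_(i < m, k < n * p)
                 (- (mxpow (sv C) (blk k) *m sdelta2 C) i (inn k)))
             0 0;
     sv := block_mx (sv C) 0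
             (\matrix_(k < n * p, i < m)
                 (if blk k == 0%N then sdelta1 C (inn k) i else 0))
             (\matrix_(k < n * p, l < n * p)
                 (if (blk k == (blk l).+1) && (inn k == inn l) then 1 else 0));
     sdelta2 := col_mx (mxpow (sv C) n *m sdelta2 C) 0;
     sdelta1 := row_mx 0 (\matrix_(j < p, k < n * p)
                 (if (blk k == n.-1) && (inn k == j) then 1 else 0));
     sr := 0 |}.

Definition iota_n (n : nat) (C : SData) : SMor C (Sigma n C) :=
  @MkSMor C (Sigma n C)
    (col_mx 1%:M 0)
    0
    0
    (col_mx 0 (\matrix_(k < n * sp C, j < sp C)
                 (if (blk k == 0%N) && (inn k == j) then 1 else 0)))
    0.

End SComplexes.

(* On the new summands R[-2b-1] of Sigma^n C~ the factorisation lambda' is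
   given by maps x_b : R -> C' with x_0 = Delta2 and
   x_(b+1) = v' x_b + mu v^b delta2; on C[-2n] it is lambda, and
   mu' = (mu, 0), Delta1' = (Delta1, 0), Delta2' = x_n, rho' = tau_n.
   One has tau_(b+1) = delta1' x_b + Delta1 v^b delta2, and since delta1 v^b
   delta2 and d v^b delta2 vanish in an r-perfect complex, the morphism
   equations for lambda give d' x_(b+1) = delta2' tau_(b+1) - lambda v^(b+1)
   delta2.  As tau_(b+1) = 0 for b + 1 < n, these are exactly the equations
   making lambda' a morphism.  Its height-0 invariant is rho' = tau_n, so
   lambda' is strong precisely when lambda is. *)
From mathcomp Require Import all_boot all_algebra zify.
Set Implicit Arguments. Unset Strict Implicit. Unset Printing Implicit Defensive.
Import GRing.Theory.
Local Open Scope ring_scope.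

Section SShapedMatrices.
Variable R : pzRingType.

Definition smx m1 m2 p1 p2 (a1 a2 a3 : 'M[R]_(m1, m2)) (a4 : 'M[R]_(m1, p2))
    (a5 : 'M[R]_(p1, m2)) (a6 : 'M[R]_(p1, p2)) :
    'M[R]_(m1 + m1 + p1, m2 + m2 + p2) :=
  block_mx (block_mx a1 0 a2 a3) (col_mx 0 a4) (row_mx a5 0) a6.

Lemma mulmx_smx m1 m2 m3 p1 p2 p3 (a1 a2 a3 : 'M[R]_(m1, m2))
    (a4 : 'M[R]_(m1, p2)) (a5 : 'M[R]_(p1, m2)) (a6 : 'M[R]_(p1, p2))
    (b1 b2 b3 : 'M[R]_(m2, m3)) (b4 : 'M[R]_(m2, p3))
    (b5 : 'M[R]_(p2, m3)) (b6 : 'M[R]_(p2, p3)) :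
  smx a1 a2 a3 a4 a5 a6 *m smx b1 b2 b3 b4 b5 b6 =
  smx (a1 *m b1) (a2 *m b1 + a3 *m b2 + a4 *m b5) (a3 *m b3)
      (a3 *m b4 + a4 *m b6) (a5 *m b1 + a6 *m b5) (a6 *m b6).
Proof.
rewrite /smx !mulmx_block mul_col_row !mul_block_col mul_row_block.
rewrite !mul_row_col !(mul0mx, mulmx0, addr0, add0r).
rewrite !mul_mx_row !mulmx0 !add_block_mx mul_col_mx mul0mx add_col_mx add_row_mx.
by rewrite !(addr0, add0r).
Qed.

Lemma eq_smx m1 m2 p1 p2 (a1 a2 a3 : 'M[R]_(m1, m2)) (a4 : 'M[R]_(m1, p2))
    (a5 : 'M[R]_(p1, m2)) (a6 : 'M[R]_(p1, p2)) b1 b2 b3 b4 b5 b6 :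
  smx a1 a2 a3 a4 a5 a6 = smx b1 b2 b3 b4 b5 b6 ->
  [/\ a1 = b1, a2 = b2, a3 = b3, a4 = b4 & a5 = b5 /\ a6 = b6].
Proof.
by rewrite /smx => /eq_block_mx [/eq_block_mx [-> _ -> ->] /eq_col_mx [_ ->]
  /eq_row_mx [-> _] ->].
Qed.

Lemma smx0 m1 m2 p1 p2 :
  smx 0 0 0 0 0 0 = 0 :> 'M[R]_(m1 + m1 + p1, m2 + m2 + p2).
Proof. by rewrite /smx col_mx0 row_mx0 !block_mx0. Qed.

End SShapedMatrices.

Section Blocks.
Variables (R : pzRingType) (n p : nat).
Implicit Types (k : 'I_(n * p)).

Lemma blk_lt k : (blk k < n)%N.
Proof.
rewrite /blk; have := ltn_ord k; move: (nat_of_ord k) => x.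
by case: p => [|p']; rewrite ?muln0 // ltn_divLR.
Qed.

Lemma mkblk_subproof b (j : 'I_p) : (b < n)%N -> (b * p + j < n * p)%N.
Proof. by move=> hb; have := ltn_ord j; nia. Qed.

Definition mkblk b (j : 'I_p) (hb : (b < n)%N) : 'I_(n * p) :=
  Ordinal (mkblk_subproof j hb).

Lemma blk_mkblk b j hb : blk (@mkblk b j hb) = b.
Proof. by rewrite /blk /= divnMDl ?divn_small ?addn0 //; case: p j => [[]|]. Qed.

Lemma inn_mkblk b j hb : inn (@mkblk b j hb) = j.
Proof. by apply: val_inj; rewrite /= modnMDl modn_small. Qed.

Lemma sum_blk_inn b (j : 'I_p) (hb : (b < n)%N) (g : 'I_(n * p) -> R) :
  \sum_(k < n * p) (if (blk k == b) && (inn k == j) then g k else 0) =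
  g (mkblk j hb).
Proof.
rewrite (bigD1 (mkblk j hb)) //= blk_mkblk inn_mkblk !eqxx /= big1 ?addr0 //.
move=> k hk; case: ifP => // /andP [/eqP hb' /eqP hj']; case/eqP: hk.
by apply: val_inj; rewrite /= (divn_eq k p) -hj' -hb'.
Qed.

Lemma sum_blk_inn_out b (j : 'I_p) (g : 'I_(n * p) -> R) : (n <= b)%N ->
  \sum_(k < n * p) (if (blk k == b) && (inn k == j) then g k else 0) = 0.
Proof.
move=> hb; rewrite big1 // => k _; case: ifP => // /andP [/eqP hbk _].
by move: hb; rewrite -hbk leqNgt blk_lt.
Qed.

Lemma sum_eq_inn (j0 : 'I_p) (g : 'I_p -> R) :
  \sum_(j < p) (if j0 == j then g j else 0) = g j0.
Proof.
rewrite (bigD1 j0) //= eqxx big1 ?addr0 // => j hj.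
by case: eqP => // E; move: hj; rewrite E eqxx.
Qed.

Definition blk_row a (F : nat -> 'M[R]_(a, p)) : 'M[R]_(a, n * p) :=
  \matrix_(i < a, k < n * p) F (blk k) i (inn k).

Definition blk_in0 : 'M[R]_(n * p, p) :=
  \matrix_(k < n * p, j < p) (if (blk k == 0%N) && (inn k == j) then 1 else 0).

Definition blk_shift : 'M[R]_(n * p) :=
  \matrix_(k < n * p, l < n * p)
     (if (blk k == (blk l).+1) && (inn k == inn l) then 1 else 0).

Definition blk_out_last : 'M[R]_(p, n * p) :=
  \matrix_(j < p, k < n * p) (if (blk k == n.-1) && (inn k == j) then 1 else 0).

Lemma eq_blk_row a (F G : nat -> 'M[R]_(a, p)) :
  (forall b, (b < n)%N -> F b = G b) -> blk_row F = blk_row G.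
Proof. by move=> FG; apply/matrixP => i k; rewrite !mxE FG // blk_lt. Qed.

Lemma blk_rowD a (F G : nat -> 'M[R]_(a, p)) :
  blk_row F + blk_row G = blk_row (fun b => F b + G b).
Proof. by apply/matrixP => i k; rewrite !mxE. Qed.

Lemma mulmx_blk_row a c (A : 'M[R]_(c, a)) (F : nat -> 'M[R]_(a, p)) :
  A *m blk_row F = blk_row (fun b => A *m F b).
Proof. by apply/matrixP => i k; rewrite !mxE; apply: eq_bigr => l _; rewrite mxE. Qed.

Lemma blk_row_in0 a (F : nat -> 'M[R]_(a, p)) :
  (0 < n)%N -> blk_row F *m blk_in0 = F 0%N.
Proof.
move=> n_gt0; apply/matrixP => i j; rewrite !mxE.
rewrite (eq_bigr (fun k => if (blk k == 0%N) && (inn k == j)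
                          then F (blk k) i (inn k) else 0)); last first.
  by move=> k _; rewrite !mxE; case: ifP; rewrite ?mulr1 ?mulr0.
by rewrite (sum_blk_inn _ n_gt0) blk_mkblk inn_mkblk.
Qed.

Lemma blk_row_shift a (F : nat -> 'M[R]_(a, p)) :
  blk_row F *m blk_shift = blk_row (fun b => if (b.+1 < n)%N then F b.+1 else 0).
Proof.
apply/matrixP => i l; rewrite !mxE.
rewrite (eq_bigr (fun k => if (blk k == (blk l).+1) && (inn k == inn l)
                          then F (blk k) i (inn k) else 0)); last first.
  by move=> k _; rewrite !mxE; case: ifP; rewrite ?mulr1 ?mulr0.
case: (ltnP (blk l).+1 n) => hb; last by rewrite sum_blk_inn_out ?mxE.
by rewrite (sum_blk_inn _ hb) blk_mkblk inn_mkblk.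
Qed.

Lemma mulmx_blk_out_last a (W : 'M[R]_(a, p)) :
  W *m blk_out_last = blk_row (fun b => if b == n.-1 then W else 0).
Proof.
apply/matrixP => i k; rewrite !mxE.
rewrite (eq_bigr (fun j => if inn k == j then
                            (if blk k == n.-1 then W i j else 0) else 0)).
  by rewrite sum_eq_inn; case: ifP; rewrite ?mxE.
move=> j _; rewrite !mxE.
by case: (blk k == n.-1); case: (inn k == j); rewrite ?mulr1 ?mulr0.
Qed.

Lemma blk_in0_mul m (D : 'M[R]_(p, m)) :
  blk_in0 *m D = \matrix_(k < n * p, i < m) (if blk k == 0%N then D (inn k) i else 0).
Proof.
apply/matrixP => k i; rewrite !mxE.
rewrite (eq_bigr (fun j => if inn k == j then
                            (if blk k == 0%N then D j i else 0) else 0)).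
  by rewrite sum_eq_inn.
move=> j _; rewrite !mxE.
by case: (blk k == 0%N); case: (inn k == j); rewrite ?mul1r ?mul0r.
Qed.

End Blocks.

Section GradedMaps.
Variable R : comPzRingType.
Notation graded := (@graded_hom R).

Lemma graded0 m n (dt : 'I_m -> int) (ds : 'I_n -> int) k : graded dt ds k 0.
Proof. by move=> i j; rewrite mxE eqxx. Qed.

Lemma graded1 n (d : 'I_n -> int) : graded d d 0 1%:M.
Proof.
by move=> i j; rewrite mxE addr0; case: (i =P j) => [->|] //; rewrite eqxx.
Qed.

Lemma sub_graded m n (dt dt' : 'I_m -> int) (ds ds' : 'I_n -> int) k k' A :
  (forall i j, dt i = ds j + k -> dt' i = ds' j + k') ->
  graded dt ds k A -> graded dt' ds' k' A.
Proof. by move=> sub_deg gA i j /gA /sub_deg. Qed.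

Lemma gradedD m n (dt : 'I_m -> int) (ds : 'I_n -> int) k A B :
  graded dt ds k A -> graded dt ds k B -> graded dt ds k (A + B).
Proof.
move=> gA gB i j; rewrite mxE; have [/gA //|] := boolP (A i j != 0).
by rewrite negbK => /eqP ->; rewrite add0r => /gB.
Qed.

Lemma graded_mulmx m l n (dt : 'I_m -> int) (dm : 'I_l -> int) (ds : 'I_n -> int)
    k1 k2 A B :
  graded dt dm k1 A -> graded dm ds k2 B -> graded dt ds (k1 + k2) (A *m B).
Proof.
move=> gA gB i j ABij.
have /existsP [l' ABl] : [exists l', A i l' * B l' j != 0].
  apply: contraR ABij => /existsPn AB0; rewrite mxE big1 // => l' _.
  by apply/eqP; have := AB0 l'; rewrite negbK.
have Ail : A i l' != 0 by apply: contraNneq ABl => ->; rewrite mul0r.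
have Blj : B l' j != 0 by apply: contraNneq ABl => ->; rewrite mulr0.
by rewrite (gA _ _ Ail) (gB _ _ Blj) -addrA (addrC k2).
Qed.

Lemma graded_mxpow n (d : 'I_n -> int) k (A : 'M[R]_n) i :
  graded d d k A -> graded d d (k * i%:Z) (mxpow A i).
Proof.
move=> gA; elim: i => [|i IH] /=; first by rewrite mulr0; apply: graded1.
by rewrite intS mulrDr mulr1; apply: graded_mulmx gA IH.
Qed.

Lemma graded_odd_eq0 m n (dt : 'I_m -> int) (ds : 'I_n -> int) k A :
  (forall i, (2 %| dt i)%Z) -> (forall j, (2 %| ds j)%Z) -> ~~ (2 %| k)%Z ->
  graded dt ds k A -> A = 0.
Proof.
move=> dt_even ds_even k_odd gA; apply/matrixP => i j; rewrite mxE.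
apply/eqP; apply: contraNT k_odd => /gA dij.
move: (dt_even i) (ds_even j); rewrite dij => /dvdzP [a ha] /dvdzP [b hb].
by apply/dvdzP; exists (a - b); rewrite mulrBl -ha -hb addrAC subrr add0r.
Qed.

Lemma graded_row_mx m n1 n2 (dt : 'I_m -> int) (ds : 'I_(n1 + n2) -> int) k
    (A : 'M[R]_(m, n1)) (B : 'M[R]_(m, n2)) :
  graded dt (fun j => ds (lshift n2 j)) k A ->
  graded dt (fun j => ds (rshift n1 j)) k B -> graded dt ds k (row_mx A B).
Proof.
move=> gA gB i j; rewrite -(splitK j); case: (split j) => j' /=.
  by rewrite row_mxEl => /gA.
by rewrite row_mxEr => /gB.
Qed.

Lemma graded_col_mx m1 m2 n (dt : 'I_(m1 + m2) -> int) (ds : 'I_n -> int) k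
    (A : 'M[R]_(m1, n)) (B : 'M[R]_(m2, n)) :
  graded (fun i => dt (lshift m2 i)) ds k A ->
  graded (fun i => dt (rshift m1 i)) ds k B -> graded dt ds k (col_mx A B).
Proof.
move=> gA gB i j; rewrite -(splitK i); case: (split i) => i' /=.
  by rewrite col_mxEu => /gA.
by rewrite col_mxEd => /gB.
Qed.

(* [tdeg C] is convertible to [tot_deg (sdegC C) (sdegR C)]. *)
Definition tot_deg m p (dC : 'I_m -> int) (dR : 'I_p -> int) (i : 'I_(m + m + p)) :=
  match split i with
  | inl a => match split a with inl x => dC x | inr x => dC x + 1 end
  | inr y => dR y
  end.

Lemma tot_deg_C m p dC dR (x : 'I_m) :
  @tot_deg m p dC dR (lshift p (lshift m x)) = dC x.
Proof. by rewrite /tot_deg !(unsplitK (inl _ _)). Qed.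

Lemma tot_deg_C1 m p dC dR (x : 'I_m) :
  @tot_deg m p dC dR (lshift p (rshift m x)) = dC x + 1.
Proof. by rewrite /tot_deg (unsplitK (inl _ _)) (unsplitK (inr _ _)). Qed.

Lemma tot_deg_R m p dC dR (y : 'I_p) : @tot_deg m p dC dR (rshift (m + m) y) = dR y.
Proof. by rewrite /tot_deg (unsplitK (inr _ _)). Qed.

Lemma graded_smxE m1 m2 p1 p2 (dC1 : 'I_m1 -> int) (dR1 : 'I_p1 -> int)
    (dC2 : 'I_m2 -> int) (dR2 : 'I_p2 -> int) k
    (a1 a2 a3 : 'M[R]_(m1, m2)) (a4 : 'M[R]_(m1, p2))
    (a5 : 'M[R]_(p1, m2)) (a6 : 'M[R]_(p1, p2)) :
  graded (tot_deg dC1 dR1) (tot_deg dC2 dR2) k (smx a1 a2 a3 a4 a5 a6) <->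
  [/\ graded dC1 dC2 k a1, graded (fun i => dC1 i + 1) dC2 k a2,
      graded (fun i => dC1 i + 1) (fun j => dC2 j + 1) k a3,
      graded (fun i => dC1 i + 1) dR2 k a4 &
      graded dR1 dC2 k a5 /\ graded dR1 dR2 k a6].
Proof.
split=> [g|[g1 g2 g3 g4 [g5 g6]]].
  split; last split; move=> i j.
  - by move: (g (lshift p1 (lshift m1 i)) (lshift p2 (lshift m2 j)));
      rewrite /smx !block_mxEul !tot_deg_C.
  - by move: (g (lshift p1 (rshift m1 i)) (lshift p2 (lshift m2 j)));
      rewrite /smx !block_mxEul block_mxEdl tot_deg_C1 tot_deg_C.
  - by move: (g (lshift p1 (rshift m1 i)) (lshift p2 (rshift m2 j)));
      rewrite /smx !block_mxEul block_mxEdr !tot_deg_C1.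
  - by move: (g (lshift p1 (rshift m1 i)) (rshift (m2 + m2) j));
      rewrite /smx !block_mxEur col_mxEd tot_deg_C1 tot_deg_R.
  - by move: (g (rshift (m1 + m1) i) (lshift p2 (lshift m2 j)));
      rewrite /smx !block_mxEdl row_mxEl tot_deg_R tot_deg_C.
  - by move: (g (rshift (m1 + m1) i) (rshift (m2 + m2) j));
      rewrite /smx !block_mxEdr !tot_deg_R.
rewrite /smx /block_mx; apply: graded_col_mx; apply: graded_row_mx.
- apply: graded_col_mx; apply: graded_row_mx.
  + by move=> i j; rewrite !tot_deg_C; apply: g1.
  + exact: graded0.
  + by move=> i j; rewrite tot_deg_C1 tot_deg_C; apply: g2.
  + by move=> i j; rewrite !tot_deg_C1; apply: g3.
- apply: graded_col_mx; first exact: graded0.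
  by move=> i j; rewrite tot_deg_C1 tot_deg_R; apply: g4.
- apply: graded_row_mx; last exact: graded0.
  by move=> i j; rewrite tot_deg_R tot_deg_C; apply: g5.
- by move=> i j; rewrite !tot_deg_R; apply: g6.
Qed.

End GradedMaps.

Section SComplexes.
Variable R : comPzRingType.
Notation graded := (@graded_hom R).

Lemma tot_dE (C : SData R) :
  tot_d C = smx (sd C) (sv C) (- sd C) (sdelta2 C) (sdelta1 C) (sr C).
Proof. by []. Qed.

Lemma mor_totE (C C' : SData R) (L : SMor C C') :
  mor_tot L = smx (mlam L) (mmu L) (mlam L) (mD2 L) (mD1 L) (mrho L).
Proof. by []. Qed.

Lemma mxpowS m (A : 'M[R]_m) i : mxpow A i.+1 = A *m mxpow A i.
Proof. by []. Qed.

Lemma Scx_graded (C : SData R) : is_Scx C ->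
  [/\ graded (@sdegC R C) (@sdegC R C) (-1) (sd C),
      graded (@sdegC R C) (@sdegC R C) (-2) (sv C),
      graded (@sdegC R C) (@sdegR R C) (-2) (sdelta2 C),
      graded (@sdegR R C) (@sdegC R C) (-1) (sdelta1 C) &
      graded (@sdegR R C) (@sdegR R C) (-1) (sr C)].
Proof.
case=> /graded_smxE [gd gv _ gd2 [gd1 gr]] _; split => //.
  by apply: sub_graded gv => i j; lia.
by apply: sub_graded gd2 => i j; lia.
Qed.

Lemma Smor_graded (C C' : SData R) k (L : SMor C C') :
  graded (@tdeg R C') (@tdeg R C) k (mor_tot L) ->
  [/\ graded (@sdegC R C') (@sdegC R C) k (mlam L),
      graded (@sdegC R C') (@sdegC R C) (k - 1) (mmu L),
      graded (@sdegC R C') (@sdegR R C) (k - 1) (mD2 L) &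
      graded (@sdegR R C') (@sdegC R C) k (mD1 L)].
Proof.
move/graded_smxE=> [glam gmu _ gD2 [gD1 _]]; split => //.
  by apply: sub_graded gmu => i j; lia.
by apply: sub_graded gD2 => i j; lia.
Qed.

Lemma Smor_commE (C C' : SData R) (L : SMor C C') :
  tot_d C' *m mor_tot L = mor_tot L *m tot_d C <->
  [/\ sd C' *m mlam L = mlam L *m sd C,
      sv C' *m mlam L - sd C' *m mmu L + sdelta2 C' *m mD1 L
        = mmu L *m sd C + mlam L *m sv C + mD2 L *m sdelta1 C,
      - (sd C' *m mD2 L) + sdelta2 C' *m mrho L
        = mlam L *m sdelta2 C + mD2 L *m sr C,
      sdelta1 C' *m mlam L + sr C' *m mD1 L
        = mD1 L *m sd C + mrho L *m sdelta1 C &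
      sr C' *m mrho L = mrho L *m sr C].
Proof.
rewrite tot_dE mor_totE !mulmx_smx !mulNmx !mulmxN; split.
  by case/eq_smx => E1 E2 _ E4 [E5 E6].
by case=> E1 E2 E4 E5 E6; rewrite E1 E2 E4 E5 E6.
Qed.

Lemma rperfect_sr0 (C : SData R) : is_Scx C -> rperfect C -> sr C = 0.
Proof. by move=> /Scx_graded [_ _ _ _ gr] C_even; apply: graded_odd_eq0 gr. Qed.

Lemma Scx_relations (C : SData R) : is_Scx C -> sr C = 0 ->
  sd C *m sdelta2 C = 0 /\ sd C *m sv C = sv C *m sd C + sdelta2 C *m sdelta1 C.
Proof.
case=> _; rewrite tot_dE mulmx_smx -(smx0 R) => + r0.
case/eq_smx => _ E2 _ E4 _; rewrite r0 mulmx0 addr0 mulNmx in E4; split.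
  by apply/eqP; rewrite -oppr_eq0 E4.
by move/eqP: E2; rewrite mulNmx addrAC addr_eq0 opprK => /eqP.
Qed.

Lemma rperfect_delta1_v_delta2 (C : SData R) : is_Scx C -> rperfect C ->
  forall j, sdelta1 C *m mxpow (sv C) j *m sdelta2 C = 0.
Proof.
move=> /Scx_graded [_ gv gd2 gd1 _] C_even j.
have gv_j := graded_mxpow (i := j) gv.
apply: graded_odd_eq0 (graded_mulmx (graded_mulmx gd1 gv_j) gd2) => //.
by apply/negP => /dvdzP [q hq]; lia.
Qed.

Lemma rperfect_d_v_delta2 (C : SData R) : is_Scx C -> rperfect C ->
  forall j, sd C *m mxpow (sv C) j *m sdelta2 C = 0.
Proof.
move=> SC C_even; have [dd2 dv] := Scx_relations SC (rperfect_sr0 SC C_even).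
elim=> [|j IH]; first by rewrite mulmx1.
have d1vd2 := rperfect_delta1_v_delta2 SC C_even j.
rewrite -mulmxA in IH; rewrite -mulmxA in d1vd2.
by rewrite mxpowS !mulmxA dv !mulmxDl -!mulmxA IH d1vd2 !mulmx0 addr0.
Qed.

End SComplexes.

Section SigmaFactorisation.
Variables (R : comPzRingType) (n : nat) (C C' : SData R) (k : int) (L : SMor C C').
Hypotheses (n_gt0 : (0 < n)%N) (SC : is_Scx C) (SC' : is_Scx C').
Hypotheses (C_rperf : rperfect C) (C'_rperf : rperfect C') (L_mor : is_Smor k L)
  (tau_lt_n : forall j, (j < n)%N -> tau L j = 0).
Notation graded := (@graded_hom R).

Local Notation d := (sd C). Local Notation v := (sv C).
Local Notation d1 := (sdelta1 C). Local Notation d2 := (sdelta2 C).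
Local Notation d' := (sd C'). Local Notation v' := (sv C').
Local Notation d1' := (sdelta1 C'). Local Notation d2' := (sdelta2 C').
Local Notation lam := (mlam L). Local Notation mu := (mmu L).
Local Notation D1 := (mD1 L). Local Notation D2 := (mD2 L).

Let r0 : sr C = 0 := rperfect_sr0 SC C_rperf.
Let r0' : sr C' = 0 := rperfect_sr0 SC' C'_rperf.
Let rho0 : mrho L = 0 := tau_lt_n n_gt0.

Lemma L_relations :
  [/\ d' *m lam = lam *m d,
      v' *m lam - d' *m mu + d2' *m D1 = mu *m d + lam *m v + D2 *m d1,
      d' *m D2 = - (lam *m d2) &
      d1' *m lam = D1 *m d].
Proof.
have [_ /Smor_commE [Elam Emu ED2 ED1 _]] := L_mor.
move: ED2 ED1; rewrite r0 r0' rho0 !(mulmx0, mul0mx, addr0) => /eqP.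
by rewrite eqr_oppLR => /eqP.
Qed.

Fixpoint xlift (b : nat) : 'M[R]_(sm C', sp C) :=
  if b is b'.+1 then v' *m xlift b' + mu *m mxpow v b' *m d2 else D2.

Lemma xliftE b : xlift b = mxpow v' b *m D2 +
  \sum_(j < b) (mxpow v' j *m mu *m mxpow v (b - 1 - j) *m d2).
Proof.
elim: b => [|b IH]; first by rewrite big_ord0 addr0 mul1mx.
rewrite /= IH mulmxDr mulmx_sumr big_ord_recl /= mul1mx.
rewrite (_ : b.+1 - 1 - 0 = b)%N; last by lia.
rewrite mulmxA -addrA; congr (_ + _); rewrite addrC; congr (_ + _).
apply: eq_bigr => j _; rewrite !mulmxA /bump /= add0n add1n.
by rewrite (_ : b.+1 - 1 - j.+1 = b - 1 - j)%N; last by lia.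
Qed.

Lemma tau_succE b : tau L b.+1 = d1' *m xlift b + D1 *m mxpow v b *m d2.
Proof.
rewrite /= xliftE mulmxDr mulmx_sumr mulmxA addrAC; congr (_ + _).
by congr (_ + _); apply: eq_bigr => j _; rewrite !mulmxA.
Qed.

Lemma d_xlift_succ b : d' *m xlift b = - (lam *m mxpow v b *m d2) ->
  d' *m xlift b.+1 = d2' *m tau L b.+1 - lam *m mxpow v b.+1 *m d2.
Proof.
move=> IH; have [_ Emu _ _] := L_relations.
have {}Emu : d' *m mu = v' *m lam + d2' *m D1 - (mu *m d + lam *m v + D2 *m d1).
  by rewrite -Emu opprD opprB addrACA subrr addr0 addrC subrK.
have [_ dv'] := Scx_relations SC' r0'.
have dvd2 : d *m (mxpow v b *m d2) = 0.
  by rewrite mulmxA rperfect_d_v_delta2.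
have d1vd2 : d1 *m (mxpow v b *m d2) = 0.
  by rewrite mulmxA rperfect_delta1_v_delta2.
rewrite mxpowS [xlift _.+1]/= mulmxDr mulmxA dv' mulmxDl -mulmxA IH.
rewrite !mulmxA Emu tau_succE !(mulmxDl, mulmxDr, mulNmx, mulmxN) -!mulmxA dvd2 d1vd2.
rewrite !mulmx0 add0r addr0.
set A := v' *m _; set B := d2' *m (d1' *m _).
by rewrite -(addrA A) [- A + B]addrC -addrA addKr addrA.
Qed.

Lemma d_xlift_lt b : (b < n)%N -> d' *m xlift b = - (lam *m mxpow v b *m d2).
Proof.
have [_ _ ED2 _] := L_relations.
elim: b => [|b IH] b_lt; first by rewrite /= ED2 mulmx1.
by rewrite (d_xlift_succ (IH (ltnW b_lt))) tau_lt_n // mulmx0 sub0r.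
Qed.

Lemma d_xlift_n : d' *m xlift n = d2' *m tau L n - lam *m mxpow v n *m d2.
Proof.
by case: n n_gt0 d_xlift_lt => // n' _ dx; apply/d_xlift_succ/dx.
Qed.

Lemma xlift_graded b :
  graded (@sdegC R C') (@sdegR R C) (k - (2 * b)%:Z - 1) (xlift b).
Proof.
have [/Smor_graded [_ gmu gD2 _] _] := L_mor.
have [_ gv gd2 _ _] := Scx_graded SC; have [_ gv' _ _ _] := Scx_graded SC'.
elim: b => [|b IH] /=; first by apply: sub_graded gD2 => i j; lia.
apply: gradedD; first by apply: sub_graded (graded_mulmx gv' IH) => i j; lia.
apply: sub_graded (graded_mulmx (graded_mulmx gmu (graded_mxpow (i := b) gv)) gd2).
by move=> i j; lia.
Qed.

Lemma tau_graded : graded (@sdegR R C') (@sdegR R C) (k - (2 * n)%:Z) (tau L n).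
Proof.
have [/Smor_graded [_ _ _ gD1] _] := L_mor.
have [_ gv gd2 _ _] := Scx_graded SC; have [_ _ _ gd1' _] := Scx_graded SC'.
case: n n_gt0 (@xlift_graded n.-1) => // n' _ gx; rewrite tau_succE.
apply: gradedD; first by apply: sub_graded (graded_mulmx gd1' gx) => i j; lia.
apply: sub_graded (graded_mulmx (graded_mulmx gD1 (graded_mxpow (i := n') gv)) gd2).
by move=> i j; lia.
Qed.

Local Notation X := (@blk_row R n (sp C) _ xlift).

Definition Sigma_lift : SMor (Sigma n C) C' :=
  @MkSMor R (Sigma n C) C'
    (row_mx lam X) (row_mx mu 0) (row_mx D1 0) (xlift n) (tau L n).

Lemma Sigma_sdE :
  sd (Sigma n C) = block_mx d (blk_row n (fun b => - (mxpow v b *m d2))) 0 0.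
Proof. by rewrite /=; congr block_mx; apply/matrixP => i j; rewrite !mxE. Qed.

Lemma Sigma_svE :
  sv (Sigma n C) = block_mx v 0 (blk_in0 R n (sp C) *m d1) (blk_shift R n (sp C)).
Proof. by rewrite blk_in0_mul. Qed.

Lemma Sigma_delta1E : sdelta1 (Sigma n C) = row_mx 0 (blk_out_last R n (sp C)).
Proof. by []. Qed.

Lemma Sigma_lift_lam_eq : d' *m row_mx lam X = row_mx lam X *m sd (Sigma n C).
Proof.
have [Elam _ _ _] := L_relations.
rewrite Sigma_sdE mul_mx_row mul_row_block !mulmx0 !addr0 Elam; congr row_mx.
rewrite !mulmx_blk_row; apply: eq_blk_row => b b_lt.
by rewrite d_xlift_lt // mulmxN mulmxA.
Qed.

Lemma Sigma_lift_mu_eq :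
  v' *m row_mx lam X - d' *m row_mx mu 0 + d2' *m row_mx D1 0 =
  row_mx mu 0 *m sd (Sigma n C) + row_mx lam X *m sv (Sigma n C)
  + xlift n *m sdelta1 (Sigma n C).
Proof.
have [_ Emu _ _] := L_relations.
rewrite Sigma_sdE Sigma_svE Sigma_delta1E !mul_mx_row !mul_row_block.
rewrite !(mulmx0, mul0mx, addr0, add0r) !opp_row_mx !add_row_mx !(oppr0, addr0, add0r).
congr row_mx; first by rewrite mulmxA blk_row_in0 // addrA Emu.
rewrite !mulmx_blk_row blk_row_shift mulmx_blk_out_last !blk_rowD.
apply: eq_blk_row => b b_lt; case: ifP => b1_lt.
  rewrite ifN; last by lia.
  by rewrite addr0 /= mulmxN mulmxA addrC addrK.
have -> : n = b.+1 by lia.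
by rewrite /= eqxx addr0 mulmxN mulmxA addrC addrK.
Qed.

Lemma Sigma_lift_D2_eq :
  - (d' *m xlift n) + d2' *m tau L n =
  row_mx lam X *m sdelta2 (Sigma n C) + xlift n *m sr (Sigma n C).
Proof.
rewrite [sdelta2 (Sigma _ _)]/= [sr (Sigma _ _)]/= mul_row_col !mulmx0 !addr0.
by rewrite d_xlift_n mulmxA opprB subrK.
Qed.

Lemma Sigma_lift_D1_eq :
  d1' *m row_mx lam X + sr C' *m row_mx D1 0 =
  row_mx D1 0 *m sd (Sigma n C) + tau L n *m sdelta1 (Sigma n C).
Proof.
have [_ _ _ ED1] := L_relations.
rewrite r0' mul0mx addr0 Sigma_sdE Sigma_delta1E mul_mx_row mul_row_block mul_mx_row.
rewrite !(mulmx0, mul0mx, addr0) add_row_mx addr0 ED1; congr row_mx.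
rewrite !mulmx_blk_row mulmx_blk_out_last blk_rowD; apply: eq_blk_row => b b_lt.
case: ifP => b_last.
  have -> : n = b.+1 by lia.
  by rewrite tau_succE mulmxN mulmxA addrC addrK.
have b1_lt : (b.+1 < n)%N by move/eqP: b_last; lia.
have /eqP := tau_lt_n b1_lt; rewrite tau_succE addr_eq0 => /eqP ->.
by rewrite addr0 mulmxN mulmxA.
Qed.

Lemma Sigma_lift_graded :
  graded (@tdeg R C') (@tdeg R (Sigma n C)) (k - (2 * n)%:Z) (mor_tot Sigma_lift).
Proof.
have [/Smor_graded [glam gmu _ gD1] _] := L_mor.
have gX : graded (@sdegC R C') (fun j => @sdegC R (Sigma n C) (rshift (sm C) j))
                 (k - (2 * n)%:Z) X.
  move=> i j; rewrite /= (unsplitK (inr _ _)) mxE => /xlift_graded.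
  by have := blk_lt j; lia.
apply/graded_smxE; split; last split.
- apply: graded_row_mx gX => i j.
  by rewrite /= (unsplitK (inl _ _)) => /glam; lia.
- apply: graded_row_mx => i j; last by rewrite mxE eqxx.
  by rewrite /= (unsplitK (inl _ _)) => /gmu; lia.
- apply: graded_row_mx => i j; last by move/gX; lia.
  by rewrite /= (unsplitK (inl _ _)) => /glam; lia.
- by move=> i j /xlift_graded /=; lia.
- apply: graded_row_mx => i j; last by rewrite mxE eqxx.
  by rewrite /= (unsplitK (inl _ _)) => /gD1; lia.
- exact: tau_graded.
Qed.

Lemma Sigma_lift_Smor : is_Smor (k - (2 * n)%:Z) Sigma_lift.
Proof.
split; first exact: Sigma_lift_graded.
apply/Smor_commE; split.
- exact: Sigma_lift_lam_eq.
- exact: Sigma_lift_mu_eq.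
- exact: Sigma_lift_D2_eq.
- exact: Sigma_lift_D1_eq.
- by rewrite r0' [sr (Sigma _ _)]/= mul0mx mulmx0.
Qed.

Lemma Sigma_lift_iota : mor_tot Sigma_lift *m mor_tot (iota_n n C) = mor_tot L.
Proof.
rewrite !mor_totE mulmx_smx; congr smx => /=.
- by rewrite mul_row_col mulmx1 mulmx0 addr0.
- by rewrite mul_row_col mulmx1 !mulmx0 !addr0.
- by rewrite mul_row_col mulmx1 mulmx0 addr0.
- by rewrite mul_row_col !mulmx0 add0r addr0 blk_row_in0.
- by rewrite mul_row_col mulmx1 !mulmx0 !addr0.
- by rewrite mulmx0 rho0.
Qed.

End SigmaFactorisation.

Unset Implicit Arguments.

Theorem proposition2p14 (R : comPzRingType) (n : nat) (C C' : SData R)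
  (k : int) (L : SMor C C') :
  (0 < n)%N -> is_Scx C -> is_Scx C' ->
  (height_mor n k L ->
     exists (k' : int) (L' : SMor (Sigma n C) C'),
       height_mor 0 k' L' /\ mor_tot L' *m mor_tot (iota_n n C) = mor_tot L) /\
  (strong_height_mor n k L ->
     exists (k' : int) (L' : SMor (Sigma n C) C'),
       strong_height_mor 0 k' L' /\ mor_tot L' *m mor_tot (iota_n n C) = mor_tot L).
Proof.
move=> n_gt0 SC SC'.
have lift : height_mor n k L ->
    height_mor 0 (k - (2 * n)%:Z) (Sigma_lift n L) /\
    mor_tot (Sigma_lift n L) *m mor_tot (iota_n n C) = mor_tot L.
  case=> C_rperf C'_rperf L_mor k_even tau_lt_n.
  split; last exact: Sigma_lift_iota.
  split=> //; first exact: Sigma_lift_Smor.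
  by move/dvdzP: k_even => [q ->]; apply/dvdzP; exists (q - n%:Z); lia.
split=> [hL | [hL tau_iso]]; exists (k - (2 * n)%:Z), (Sigma_lift n L).
  exact: lift.
by have [h0 comp] := lift hL; split; first split.
Qed.
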